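(* Let $\theta_1,\theta_2\in(0,\pi/2)$ satisfy $\theta_1\cot\theta_1=(\pi-\theta_2)\cot\theta_2$. Then $$\frac{\theta_1}{\sin\theta_1}+\cos\theta_1>\frac{\pi-\theta_2}{\sin\theta_2}-\cos\theta_2.$$ *)

From Stdlib Require Import Reals.

(* Write k for the common value of x cot x.  Since 1 / sin x = sin x + cot x cos x,
   the two sides are E(θ1) and E(θ2) + (π - 2θ2) sin θ2 - 2 cos θ2, where
   E(t) = t sin t + (1 + k) cos t.  The proof rests on three calculus facts on (0, π):
   - x cos x < sin x (the derivative of sin x - x cos x is x sin x > 0);
   - x cot x is strictly decreasing (its derivative is (sin x cos x - x) / sin² x);
   - hence E'(t) = sin t (t cot t - θ1 cot θ1) changes sign from + to - at θ1,
     so E attains its maximum on (0, π) at θ1.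
   Applying the first fact at π/2 - θ2 gives (π - 2θ2) sin θ2 < 2 cos θ2, and the
   maximality of E at θ1 gives E(θ2) <= E(θ1); together they yield the corollary. *)
From Stdlib Require Import Reals Lra.
From Coquelicot Require Import Coquelicot.
Open Scope R_scope.

Lemma lt_of_derive_pos (f f' : R -> R) (x y : R) :
  x < y ->
  (forall c, x <= c <= y -> is_derive f c (f' c)) ->
  (forall c, x < c < y -> 0 < f' c) ->
  f x < f y.
Proof.
  intros Hxy Hder Hpos.
  destruct (MVT_cor2 f f' x y Hxy) as [c [Hmvt Hc]].
  - intros c Hc; apply is_derive_Reals, Hder, Hc.
  - assert (0 < f' c * (y - x)) by (apply Rmult_lt_0_compat; [apply Hpos, Hc | lra]).
    lra.
Qed.

Definition xcot (x : R) : R := x * (cos x / sin x).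

Lemma sin_pos_0_PI (x : R) : 0 < x < PI -> 0 < sin x.
Proof. intros [Hx0 HxPI]; exact (sin_gt_0 x Hx0 HxPI). Qed.

Lemma x_cos_lt_sin (x : R) : 0 < x < PI -> x * cos x < sin x.
Proof.
  intros Hx.
  enough (Hlt : sin 0 - 0 * cos 0 < sin x - x * cos x) by (rewrite sin_0 in Hlt; lra).
  apply (lt_of_derive_pos (fun t => sin t - t * cos t) (fun t => t * sin t)); [lra | |].
  - intros c _; auto_derive; [exact I | ring].
  - intros c Hc; apply Rmult_lt_0_compat; [lra | apply sin_pos_0_PI; lra].
Qed.

Lemma xcot_derive (c : R) : sin c <> 0 ->
  is_derive xcot c ((sin c * cos c - c) / sin c ^ 2).
Proof.
  intros Hs; unfold xcot; auto_derive; [exact Hs |].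
  assert (Hpyth := sin2_cos2 c); unfold Rsqr in Hpyth.
  replace (sin c * cos c - c)
    with (sin c * cos c - c * (sin c * sin c + cos c * cos c)) by (rewrite Hpyth; ring).
  field; exact Hs.
Qed.

(* x cot x is strictly decreasing on (0, π), because sin x cos x <= sin x < x there. *)
Lemma xcot_decreasing (x y : R) : 0 < x -> x < y -> y < PI -> xcot y < xcot x.
Proof.
  intros Hx Hxy Hy.
  enough (Hlt : - xcot x < - xcot y) by lra.
  apply (lt_of_derive_pos (fun t => - xcot t)
           (fun t => - ((sin t * cos t - t) / sin t ^ 2))); [lra | |].
  - intros c Hc; apply (is_derive_opp xcot), xcot_derive.
    apply Rgt_not_eq, sin_pos_0_PI; lra.
  - intros c Hc.
    assert (Hs : 0 < sin c) by (apply sin_pos_0_PI; lra).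
    assert (Hsc : sin c < c) by (apply sin_lt_x; lra).
    assert (Hcos : cos c <= 1) by apply COS_bound.
    apply Ropp_0_gt_lt_contravar, Rmult_neg_pos; [nra | apply Rinv_0_lt_compat, pow_lt, Hs].
Qed.

(* For a ∈ (0, π), E(t) = t sin t + (1 + a cot a) cos t is maximal on (0, π) at t = a,
   since E'(t) = t cos t - (a cot a) sin t = sin t (t cot t - a cot a). *)
Lemma E_max (a t : R) : 0 < a < PI -> 0 < t < PI ->
  t * sin t + (1 + xcot a) * cos t <= a * sin a + (1 + xcot a) * cos a.
Proof.
  intros Ha Ht.
  set (k := xcot a).
  set (E := fun u => u * sin u + (1 + k) * cos u).
  assert (Hder : forall c, is_derive E c (c * cos c - k * sin c)).
  { intro c; unfold E; auto_derive; [exact I | ring]. }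
  assert (Hfactor : forall c, 0 < c < PI ->
            c * cos c - k * sin c = sin c * (xcot c - k)).
  { intros c Hc; unfold xcot.
    assert (sin c <> 0) by (apply Rgt_not_eq, sin_pos_0_PI; lra).
    field; assumption. }
  change (E t <= E a).
  destruct (Rtotal_order t a) as [Hta | [Hta | Hta]].
  - apply Rlt_le, (lt_of_derive_pos E (fun c => c * cos c - k * sin c));
      [exact Hta | intros c _; apply Hder |].
    intros c Hc; rewrite Hfactor by lra.
    apply Rmult_lt_0_compat; [apply sin_pos_0_PI; lra |].
    assert (xcot a < xcot c) by (apply xcot_decreasing; lra); unfold k; lra.
  - subst t; apply Rle_refl.
  - apply Rlt_le, Ropp_lt_cancel.
    apply (lt_of_derive_pos (fun u => - E u) (fun c => - (c * cos c - k * sin c)));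
      [exact Hta | intros c _; apply (is_derive_opp E), Hder |].
    intros c Hc; rewrite Hfactor by lra.
    apply Ropp_0_gt_lt_contravar, Rmult_pos_neg; [apply sin_pos_0_PI; lra |].
    assert (xcot c < xcot a) by (apply xcot_decreasing; lra); unfold k; lra.
Qed.

Lemma div_sin_decompose (a x : R) : sin x <> 0 ->
  a / sin x = a * sin x + a * (cos x / sin x) * cos x.
Proof.
  intros Hs.
  assert (Hpyth := sin2_cos2 x); unfold Rsqr in Hpyth.
  transitivity (a * (sin x * sin x + cos x * cos x) / sin x).
  - rewrite Hpyth; field; exact Hs.
  - field; exact Hs.
Qed.

Theorem corollary4p4 (t1 t2 : R)
  (h1 : 0 < t1 < PI / 2) (h2 : 0 < t2 < PI / 2)
  (heq : t1 * (cos t1 / sin t1) = (PI - t2) * (cos t2 / sin t2)) :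
  t1 / sin t1 + cos t1 > (PI - t2) / sin t2 - cos t2.
Proof.
  assert (HPI := PI_RGT_0).
  assert (Hs1 : sin t1 <> 0) by (apply Rgt_not_eq, sin_pos_0_PI; lra).
  assert (Hs2 : sin t2 <> 0) by (apply Rgt_not_eq, sin_pos_0_PI; lra).
  assert (HE := E_max t1 t2 ltac:(lra) ltac:(lra)).
  (* (π - 2θ2) sin θ2 < 2 cos θ2, from x cos x < sin x at x = π/2 - θ2 *)
  assert (Hshift := x_cos_lt_sin (PI / 2 - t2) ltac:(lra)).
  rewrite sin_shift, cos_shift in Hshift.
  rewrite (div_sin_decompose t1 t1 Hs1), (div_sin_decompose (PI - t2) t2 Hs2), <- heq.
  fold (xcot t1).
  lra.
Qed.
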